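(* Let $A,B$ be real $n{\times}n$ matrices. Extend the reals by two new elements $1^*$ and $0^*$ with the arithmetic described in the context, let $C$ be the $n{\times}n$ matrix with $1^*$ on the diagonal and $0^*$ everywhere else, and let $T'$ be the $3n{\times}3n$ block matrix $$T'=\begin{pmatrix} I & A^T & -B\\ A & C & 0\\ -B^T & 0 & C\end{pmatrix}.$$ Compute a lower triangular $3n{\times}3n$ matrix $L$ from $T'$ by the formulas $L(i,i)=\sqrt{T'(i,i)-\sum_{k=1}^{i-1}L(i,k)^2}$ and $L(i,j)=\frac{1}{L(j,j)}\big(T'(i,j)-\sum_{k=1}^{j-1}L(i,k)L(j,k)\big)$ for $i>j$ (with $L(i,j)=0$ for $i<j$), using the extended arithmetic, with the summands of each sum combined in any order, and with the entries computed in any order such that each $L(i,i)$ is computed after all of $L(i,k)$, $k<i$, and each $L(i,j)$, $i>j$, is computed after all of $L(i,k)$, $k<j$, and $L(j,k)$, $k\le j$. Then the block $L_{32}$ of $L$ (rows $2n+1,\dots,3n$, columns $n+1,\dots,2n$) equals $(A\cdot B)^T$, where $A\cdot B$ is the ordinary real matrix product.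
   Context: Extended arithmetic on $\mathbb{R}\cup\{0^*,1^*\}$ (here $x,y$ denote real numbers, and $-0^*=0^*$, $-1^*=1^*$). Addition/subtraction: $1^*\pm z=z\pm 1^*=1^*$ for every $z$; $0^*\pm 0^*=0^*$, $0^*\pm y=y\pm 0^*=0^*$; $x\pm y$ is the usual real value. Multiplication: $1^*\cdot 1^*=1^*$, $1^*\cdot 0^*=0^*\cdot 1^*=0^*$, $1^*\cdot y=y\cdot 1^*=y$, $0^*\cdot 0^*=0$, $0^*\cdot y=y\cdot 0^*=0$, and $x\cdot y$ is the usual real product. Division: division by $0^*$ is undefined; $1^*/1^*=1^*$, $0^*/1^*=0^*$, $x/1^*=x$; for real $y\neq 0$: $1^*/y=1/y$, $0^*/y=0$, $x/y$ usual. Square root: $\sqrt{1^*}=1^*$, $\sqrt{0^*}=0^*$, $\sqrt{x}$ usual for $x\ge 0$. This arithmetic is commutative and associative for both addition and multiplication (but not distributive), so the value of each sum does not depend on the order of summation. *)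

From HB Require Import structures.
From mathcomp Require Import all_boot all_order all_algebra.
Set Implicit Arguments. Unset Strict Implicit. Unset Printing Implicit Defensive.
Import Order.TTheory GRing.Theory Num.Theory.
Local Open Scope ring_scope.

Inductive ext (R : Type) := ER of R | Zs | Os .
Arguments Zs {R}. Arguments Os {R}.

Section Ext.
Variable R : rcfType.

Definition eadd (x y : ext R) : ext R :=
  match x, y with
  | Os, _ | _, Os => Os
  | Zs, _ | _, Zs => Zs
  | ER a, ER b => ER (a + b)
  end.

Definition eopp (x : ext R) : ext R :=
  match x with ER a => ER (- a) | z => z end.

Definition esub (x y : ext R) : ext R := eadd x (eopp y).

Definition emul (x y : ext R) : ext R :=
  match x, y with
  | Os, Os => Os
  | Os, Zs | Zs, Os => Zs
  | Os, ER b => ER b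
  | ER a, Os => ER a
  | Zs, Zs => ER 0
  | Zs, ER _ | ER _, Zs => ER 0
  | ER a, ER b => ER (a * b)
  end.

Definition ediv (x y : ext R) : option (ext R) :=
  match x, y with
  | _, Zs => None
  | Os, Os => Some Os
  | Zs, Os => Some Zs
  | ER a, Os => Some (ER a)
  | Os, ER b => if b == 0 then None else Some (ER (1 / b))
  | Zs, ER b => if b == 0 then None else Some (ER 0)
  | ER a, ER b => if b == 0 then None else Some (ER (a / b))
  end.

Definition esqrt (x : ext R) : option (ext R) :=
  match x with
  | Os => Some Os
  | Zs => Some Zs
  | ER a => if 0 <= a then Some (ER (Num.sqrt a)) else None
  end.

(* sum of F 0, ..., F (m-1) (undefined if some summand is undefined);
   the empty sum is the real 0. Since the extended addition is commutative
   and associative, the summation order is immaterial. *)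
Definition osum (F : nat -> option (ext R)) (m : nat) : option (ext R) :=
  foldr (fun k acc => obind (fun a => omap (eadd a) acc) (F k))
        (Some (ER 0)) (iota 0 m).

(* Cholesky-type recursion (0-based indices), with fuel f.
   The entry (i,j) only depends on entries (i',j') with i'+j' < i+j,
   so any fuel f > i + j gives the well-defined value. *)
Fixpoint chol (f : nat) (T : nat -> nat -> ext R) (i j : nat) : option (ext R) :=
  match f with
  | 0 => None
  | S f' =>
    if (i < j)%N then Some (ER 0) else
    if i == j then
      obind (fun s => esqrt (esub (T i i) s))
            (osum (fun k => omap (fun x => emul x x) (chol f' T i k)) i)
    else
      obind (fun s => obind (fun d => ediv (esub (T i j) s) d) (chol f' T j j))
            (osum (fun k => obind (fun a => omap (emul a) (chol f' T j k))
                                  (chol f' T i k)) j)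
  end.

(* entry of an n x n matrix at nat indices (0 outside the range) *)
Definition mxn (n : nat) (M : 'M[R]_n) (a b : nat) : R :=
  match @insub _ (fun x => (x < n)%N) 'I_n a, @insub _ (fun x => (x < n)%N) 'I_n b with
  | Some a', Some b' => M a' b'
  | _, _ => 0
  end.

Definition Cmx (a b : nat) : ext R := if a == b then Os else Zs.

(* T' = [[I, A^T, -B], [A, C, 0], [-B^T, 0, C]], 0-based nat indices < 3n *)
Definition Tprime (n : nat) (A B : 'M[R]_n) (i j : nat) : ext R :=
  if (i < n)%N then
    if (j < n)%N then ER (if i == j then 1 else 0)
    else if (j < 2 * n)%N then ER (mxn A (j - n) i)
    else ER (- mxn B i (j - 2 * n))
  else if (i < 2 * n)%N then
    if (j < n)%N then ER (mxn A (i - n) j)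
    else if (j < 2 * n)%N then Cmx (i - n) (j - n)
    else ER 0
  else
    if (j < n)%N then ER (- mxn B j (i - 2 * n))
    else if (j < 2 * n)%N then ER 0
    else Cmx (i - 2 * n) (j - 2 * n).

(* the computed lower triangular 3n x 3n matrix L (entries at 0-based nat
   indices < 3n; None means some operation was undefined). Fuel 6n > i+j. *)
Definition Lchol (n : nat) (A B : 'M[R]_n) (i j : nat) : option (ext R) :=
  chol (6 * n) (Tprime A B) i j.

End Ext.

(* The recursion reproduces L = [[I, 0, 0], [A, C, 0], [-B^T, B^T A^T, C]]: the
   first block column is the ordinary Cholesky step, 1^* absorbs every sum, so
   the diagonal blocks L22 and L33 are again C, and since 0^* L(j,k) is the real
   0 and division by 1^* is the identity, L(i,j) for i in block 3, j in block 2
   is -(sum_k L31(i,k) L21(j,k)) = (B^T A^T)(i-2n, j-n). *)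
From mathcomp Require Import all_boot all_order all_algebra.
From mathcomp Require Import zify.
Set Implicit Arguments. Unset Strict Implicit. Unset Printing Implicit Defensive.
Import GRing.Theory Num.Theory.
Local Open Scope ring_scope.

Ltac decide_ifs := repeat match goal with |- context [if ?b then _ else _] =>
  (have ->: b = true by apply/idP; lia) || (have ->: b = false by apply/negbTE/negP; lia) end.
Ltac split_ifs := decide_ifs; repeat (match goal with |- context [if ?b then _ else _] =>
  case: (boolP b) => ? end; decide_ifs).

Section CholeskyRecursion.
Variable R : rcfType.

(* Only used away from 1^*: in products with anything but 1^*, 0^* acts as the
   real 0. *)
Definition real_of_ext (x : ext R) : R := if x is ER r then r else 0.

Lemma emul_real_of_ext (x y : ext R) :
  x <> Os -> y <> Os -> emul x y = ER (real_of_ext x * real_of_ext y).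
Proof.
case: x => [a||] hx; last by case: hx.
all: case: y => [b||] hy; try by case: hy.
all: by rewrite /= ?mulr0 ?mul0r.
Qed.

Lemma osum_iota_real (F : nat -> option (ext R)) (g : nat -> R) (m s : nat) :
  (forall k, (s <= k < s + m)%N -> F k = Some (ER (g k))) ->
  foldr (fun k acc => obind (fun a => omap (eadd a) acc) (F k)) (Some (ER 0)) (iota s m)
  = Some (ER (\sum_(s <= k < s + m) g k)).
Proof.
elim: m s => [|m IH] s Fg; first by rewrite addn0 big_geq.
rewrite /= IH; last by move=> k /andP[? ?]; apply: Fg; lia.
rewrite Fg; last lia.
by rewrite /= (big_ltn (m := s)) ?addSnnS //; lia.
Qed.

Lemma osum_real (F : nat -> option (ext R)) (g : nat -> R) (m : nat) :
  (forall k, (k < m)%N -> F k = Some (ER (g k))) ->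
  osum F m = Some (ER (\sum_(0 <= k < m) g k)).
Proof. by move=> Fg; rewrite /osum (@osum_iota_real _ g) //= => k /andP[_ /Fg]. Qed.

(* [V] is a fixed point of the recursion on the first [N] rows, with no 1^*
   strictly below the diagonal, so that all the products in the sums are real. *)
Definition chol_factor (T V : nat -> nat -> ext R) (N : nat) : Prop :=
  [/\ forall i j, (i < j)%N -> V i j = ER 0,
      forall i k, (k < i)%N -> V i k <> Os,
      forall i, (i < N)%N -> esqrt (esub (T i i)
        (ER (\sum_(0 <= k < i) real_of_ext (V i k) * real_of_ext (V i k)))) = Some (V i i)
    & forall i j, (j < i < N)%N -> ediv (esub (T i j)
        (ER (\sum_(0 <= k < j) real_of_ext (V i k) * real_of_ext (V j k)))) (V j j)
        = Some (V i j)].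

Lemma chol_factor_eq (T V : nat -> nat -> ext R) (N f i j : nat) :
  chol_factor T V N -> (i < N)%N -> (i + j < f)%N -> chol f T i j = Some (V i j).
Proof.
case=> V_upper V_not_Os V_diag V_offdiag.
elim: f i j => [|f IH] i j iN ltf //=.
case: ltnP => [ij|ji]; first by rewrite V_upper.
case: eqP => [eij|/eqP nij]; first subst j.
  rewrite (@osum_real _ (fun k => real_of_ext (V i k) * real_of_ext (V i k))) /=.
    exact: V_diag.
  move=> k ki; rewrite IH; try lia.
  by rewrite /= emul_real_of_ext //; apply: V_not_Os.
have lt_ji : (j < i)%N by lia.
rewrite (@osum_real _ (fun k => real_of_ext (V i k) * real_of_ext (V j k))) /=.
  by rewrite IH; [apply: V_offdiag; rewrite lt_ji | lia | lia].
move=> k kj; rewrite IH /=; try lia.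
rewrite IH; try lia.
by rewrite /= emul_real_of_ext //; apply: V_not_Os; lia.
Qed.

End CholeskyRecursion.

Section BlockFactor.
Variables (R : rcfType) (n : nat) (A B : 'M[R]_n).

Lemma mxnE (M : 'M[R]_n) (a b : 'I_n) : mxn M a b = M a b.
Proof.
rewrite /mxn; case: insubP => [a' _ ea|]; last by rewrite ltn_ord.
case: insubP => [b' _ eb|]; last by rewrite ltn_ord.
by congr (M _ _); apply: val_inj.
Qed.

Definition Lblock (i j : nat) : ext R :=
  if (i < j)%N then ER 0
  else if (i < n)%N then ER (if i == j then 1 else 0)
  else if (i < 2 * n)%N then
    (if (j < n)%N then ER (mxn A (i - n) j) else Cmx R (i - n) (j - n))
  else if (j < n)%N then ER (- mxn B j (i - 2 * n))
  else if (j < 2 * n)%N then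
    ER (\sum_(0 <= k < n) mxn A (j - n) k * mxn B k (i - 2 * n))
  else Cmx R (i - 2 * n) (j - 2 * n).

Lemma Lblock_upper i j : (i < j)%N -> Lblock i j = ER 0.
Proof. by move=> ij; rewrite /Lblock ij. Qed.

Lemma Lblock_lower_not_Os i k : (k < i)%N -> Lblock i k <> Os.
Proof. move=> ki; rewrite /Lblock /Cmx; split_ifs; decide_ifs; discriminate. Qed.

Lemma Lblock_diag i : (i < 3 * n)%N ->
  esqrt (esub (Tprime A B i i)
    (ER (\sum_(0 <= k < i) real_of_ext (Lblock i k) * real_of_ext (Lblock i k))))
  = Some (Lblock i i).
Proof.
move=> i3n; case: (ltnP i n) => [i_n|n_i]; last first.
  by rewrite /Tprime /Lblock /Cmx; split_ifs.
rewrite big_nat big1; last by move=> k ki; rewrite /Lblock; decide_ifs; rewrite /= mul0r.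
by rewrite /Tprime /Lblock; decide_ifs; rewrite /= oppr0 addr0 ler01 sqrtr1.
Qed.

Lemma Lblock_offdiag i j : (j < i < 3 * n)%N ->
  ediv (esub (Tprime A B i j)
    (ER (\sum_(0 <= k < j) real_of_ext (Lblock i k) * real_of_ext (Lblock j k))))
    (Lblock j j)
  = Some (Lblock i j).
Proof.
case/andP=> ji i3n; case: (ltnP j n) => [j_n|n_j].
  rewrite big_nat big1; last by move=> k kj; rewrite [Lblock j k]/Lblock; decide_ifs; rewrite /= mulr0.
  have -> : Lblock j j = ER 1 by rewrite /Lblock; decide_ifs.
  rewrite /Tprime /Lblock; split_ifs;
    by rewrite /ediv /esub /= oner_eq0 oppr0 addr0 divr1.
have -> : Lblock j j = Os by rewrite /Lblock /Cmx; split_ifs.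
have [i_2n|twon_i] := ltnP i (2 * n).
  by rewrite /Tprime [Lblock i j]/Lblock /Cmx; split_ifs.
have [j_2n|twon_j] := ltnP j (2 * n); last first.
  by rewrite /Tprime [Lblock i j]/Lblock /Cmx; split_ifs.
rewrite /Tprime [Lblock i j]/Lblock; decide_ifs.
rewrite (@big_cat_nat _ _ _ n) //=; try lia.
have -> : \sum_(n <= k < j) real_of_ext (Lblock i k) * real_of_ext (Lblock j k) = 0.
  rewrite big_nat big1 // => k kj.
  by rewrite [Lblock j k]/Lblock /Cmx; decide_ifs; rewrite /= mulr0.
rewrite addr0 add0r -sumrN.
congr (Some (ER _)); apply: eq_big_nat => k k_n.
by rewrite /Lblock; decide_ifs; rewrite mulNr opprK mulrC.
Qed.

Lemma Lblock_chol_factor : chol_factor (Tprime A B) Lblock (3 * n).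
Proof.
split; [exact: Lblock_upper | exact: Lblock_lower_not_Os | exact: Lblock_diag
       | move=> i j; exact: Lblock_offdiag].
Qed.

End BlockFactor.

Theorem lemma2p3 (R : rcfType) (n : nat) (A B : 'M[R]_n) :
  forall i j : 'I_n,
    Lchol A B (2 * n + i) (n + j) = Some (ER ((A *m B)^T i j)).
Proof.
move=> i j; have ltin := ltn_ord i; have ltjn := ltn_ord j.
rewrite /Lchol (chol_factor_eq (Lblock_chol_factor A B)); try lia.
rewrite /Lblock; decide_ifs; congr (Some (ER _)).
rewrite !mxE !addKn (big_mkord xpredT (fun k => mxn A j k * mxn B k i)).
by apply: eq_bigr => k _; rewrite !mxnE.
Qed.
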